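(* Let $\mathcal{B}=(T,\bowtie,\ell)$ be a block and $\mathcal S$ any valid schedule of $\mathcal{B}$. Then there exists a legal partition $(B_1,\dots,B_k)$ of $T$ such that the schedule $\mathcal S'=\mathrm{LevelSchedule}(B_1,\dots,B_k)$ is equivalent to $\mathcal S$ and $\mathrm{Lt}_\ell(\mathcal S')\le \mathrm{Lt}_\ell(\mathcal S)$.
   Context: A block consists of a finite set $T$ of transactions, a conflict relation $\bowtie$, and a length function $\ell:T\to\mathbb{N}_{>0}$. Each transaction is deterministic and has a read-set $R(tx)$ and a write-set $W(tx)$ of objects of a global state it may read/write; distinct $tx_1,tx_2$ conflict ($tx_1\bowtie tx_2$) if $R(tx_1)\cap W(tx_2)$, $W(tx_1)\cap R(tx_2)$ or $W(tx_1)\cap W(tx_2)$ is nonempty. A schedule is a set $\mathcal S\subseteq T\times T$ with $(T,\mathcal S)$ acyclic; it is valid if every conflicting pair is joined by a directed path in $(T,\mathcal S)$ in one direction or the other. The latency $\mathrm{Lt}_\ell(\mathcal S)$ is the maximum, over all directed simple paths $P$ of $(T,\mathcal S)$ (including single vertices), of $\sum_{v\in P}\ell(v)$. A set is conflict-free if no two of its elements conflict; a legal partition of $T$ is an ordered sequence of pairwise disjoint conflict-free sets with union $T$. $\mathrm{LevelSchedule}(B_1,\dots,B_k)$: set $B_0=\emptyset$, $\mathcal S=\emptyset$; for $i=1,\dots,k$ and, for each $i$, for $j=i-1,\dots,0$ (decreasing): let $E=\{(u,v)\in B_j\times B_i: u\bowtie v\}$, let $P$ be the set of pairs $(x,y)$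 with a directed path from $x$ to $y$ in the current $(T,\mathcal S)$, and set $\mathcal S\leftarrow\mathcal S\cup(E\setminus P)$; output $\mathcal S$. The scheduler $GBR$ executes a schedule by running each transaction $tx$ in its own thread, which waits until all $tx'$ with $(tx',tx)\in\mathcal S$ have finished, then reads the latest versions of $R(tx)$, executes, writes $W(tx)$, emits its result and signals its out-neighbours. Two schedules are equivalent if for every initial global state, all executions of $GBR$ on either schedule produce the same result for every transaction and the same final global state. *)

From mathcomp Require Import all_boot.
Set Implicit Arguments.
Unset Strict Implicit.
Unset Printing Implicit Defensive.

Section Block.
Variables (T : finType) (O : eqType).
(* read-set and write-set of each transaction (finite lists of objects) *)
Variables (R W : T -> seq O).

Definition conflict (x y : T) : bool :=
  (x != y) &&
  [|| has (mem (W y)) (R x), has (mem (R y)) (W x) | has (mem (W y)) (W x)].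

Definition tc (S : rel T) (x y : T) : bool :=
  [exists z, S x z && connect S z y].

Definition acyclic (S : rel T) : Prop := forall x, ~~ tc S x x.

Definition valid_schedule (S : rel T) : Prop :=
  acyclic S /\ forall x y, conflict x y -> tc S x y || tc S y x.

Definition dpath (S : rel T) (p : seq T) : bool :=
  if p is x :: q then path S x q else false.

Definition latency (ell : T -> nat) (S : rel T) : nat :=
  \max_(n < #|T|.+1)
    \max_(t : n.-tuple T | uniq t && dpath S t) \sum_(v <- t) ell v.

Definition conflict_free (A : {set T}) : Prop :=
  forall x y, x \in A -> y \in A -> ~~ conflict x y.

Definition legal_partition (Bs : seq {set T}) : Prop :=
  (forall i j, i < j -> j < size Bs -> [disjoint nth set0 Bs i & nth set0 Bs j])
  /\ (forall B, B \in Bs -> conflict_free B)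
  /\ \bigcup_(B <- Bs) B = [set: T].

Definition relS (S : {set T * T}) : rel T := fun x y => (x, y) \in S.

Definition level_step (Bj Bi : {set T}) (S : {set T * T}) : {set T * T} :=
  S :|: [set e : T * T | [&& e.1 \in Bj, e.2 \in Bi, conflict e.1 e.2
                            & ~~ tc (relS S) e.1 e.2]].

(* LevelSchedule(B_1,...,B_k), with B_0 = set0; i = 1..k, j = i-1 downto 0 *)
Definition LevelSchedule (Bs : seq {set T}) : rel T :=
  let B := nth set0 (set0 :: Bs) in
  relS (foldl (fun S i =>
            foldl (fun S j => level_step (B j) (B i) S) S (rev (iota 0 i)))
          set0 (iota 1 (size Bs))).

Variables (V Res : Type).
(* deterministic semantics: result and written values, as functions of the
   global state read at the start of the transaction *)
Variables (res : T -> (O -> V) -> Res) (upd : T -> (O -> V) -> O -> V).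

Definition tx_local : Prop :=
  forall t (s1 s2 : O -> V), (forall o, o \in R t -> s1 o = s2 o) ->
    res t s1 = res t s2 /\ (forall o, o \in W t -> upd t s1 o = upd t s2 o).

(* events: inl t = thread t starts (reads the latest versions),
           inr t = thread t finishes (writes W(t)) *)
Definition execution (S : rel T) (e : seq (T + T)) : Prop :=
  perm_eq e (enum {: T + T}) /\
  (forall t, index (inl t) e < index (inr t) e) /\
  (forall u v, S u v -> index (inr u) e < index (inl v) e).

Definition run_event (st : (O -> V) * (T -> O -> V)) (ev : T + T) :=
  let: (s, snap) := st in
  match ev with
  | inl t => (s, fun t' => if t' == t then s else snap t')
  | inr t => ((fun o => if o \in W t then upd t (snap t) o else s o), snap)
  end.

Definition run (s0 : O -> V) (e : seq (T + T)) :=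
  foldl run_event (s0, fun _ => s0) e.

Definition final_state (s0 : O -> V) e : O -> V := (run s0 e).1.
Definition result (s0 : O -> V) e (t : T) : Res := res t ((run s0 e).2 t).

Definition equivalent (S1 S2 : rel T) : Prop :=
  forall (s0 : O -> V) e1 e2,
    (execution S1 e1 \/ execution S2 e1) ->
    (execution S1 e2 \/ execution S2 e2) ->
    (forall t, result s0 e1 t = result s0 e2 t) /\
    (forall o, final_state s0 e1 o = final_state s0 e2 o).

End Block.

(** Let [<] be the transitive closure of the valid schedule [S]; it is a strict
    order that orders every conflicting pair.  Group the transactions by their
    rank, the number of their [<]-predecessors.  Conflicting transactions have
    different ranks, so the rank classes form a legal partition, and the level
    schedule built from it only links conflicting transactions of increasing
    rank; these are [<]-related, so every path of the level schedule lies on a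
    path of [S] and its latency is not larger.

    Equivalence holds because any GBR execution of a schedule that orders
    conflicting pairs as [<] does is determined by [<]: by induction on the
    rank of [t], a read of [o] by [t] sees the write of the [<]-greatest
    writer of [o] below [t], or the initial value if there is none; likewise
    for the final state with all writers of [o]. *)
From mathcomp Require Import all_boot.
Set Implicit Arguments. Unset Strict Implicit. Unset Printing Implicit Defensive.

Section TransitiveClosure.
Variable T : finType.
Implicit Types (E : rel T) (x y z : T).

Lemma tc_intro E x z y : E x z -> connect E z y -> tc E x y.
Proof. by move=> Exz Czy; apply/existsP; exists z; rewrite Exz. Qed.

Lemma tc_connect E x y : tc E x y -> connect E x y.
Proof. by case/existsP=> z /andP[Exz Czy]; apply: connect_trans (connect1 Exz) Czy. Qed.

Lemma tc_trans E : transitive (tc E).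
Proof.
move=> y x z /existsP[w /andP[Exw Cwy]] /tc_connect Cyz.
exact: tc_intro Exw (connect_trans Cwy Cyz).
Qed.

Lemma tc_sub E1 E2 : subrel E1 E2 -> subrel (tc E1) (tc E2).
Proof.
move=> sE x y /existsP[z /andP[Exz Czy]]; apply: tc_intro (sE _ _ Exz) _.
by apply: connect_sub Czy => u v /sE /connect1.
Qed.

Lemma path_tc E x p y : path E x p -> y \in p -> tc E x y.
Proof.
elim: p x => //= z p IH x /andP[Exz Ep]; rewrite inE => /predU1P[->|yp].
  exact: tc_intro Exz (connect0 _ _).
exact: tc_intro Exz (tc_connect (IH _ Ep yp)).
Qed.

Lemma acyclic_path_uniq E x p : acyclic E -> path E x p -> uniq (x :: p).
Proof.
move=> acE; elim: p x => //= z p IH x /andP[Exz Ep].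
rewrite IH // andbT; apply: contraT => /negbNE xzp.
by have := acE x; rewrite (path_tc (p := z :: p)) //= Exz.
Qed.

Lemma path_tc_subseq E1 E2 x q : subrel E1 (tc E2) -> path E1 x q ->
  exists2 p, path E2 x p & subseq q p.
Proof.
move=> sE; elim: q x => [|y q IH] x /=; first by exists [::].
case/andP=> /sE/existsP[z /andP[E2xz /connectP[r E2r ->]]] /IH[p E2p sqp].
exists (z :: r ++ p); first by rewrite /= E2xz cat_path E2r.
rewrite -cat_cons (lastI z r) cat_rcons.
by apply: subseq_trans (suffix_subseq _ _); rewrite /= eqxx.
Qed.

Lemma latency_sub_tc (ell : T -> nat) E1 E2 :
  acyclic E2 -> subrel E1 (tc E2) -> latency ell E1 <= latency ell E2.
Proof.
move=> acE2 sE; apply/bigmax_leqP => n _; apply/bigmax_leqP => t /andP[_].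
rewrite /dpath; case: (tval t) => [|x q] // /(path_tc_subseq sE)[p E2p sqp].
have uxp := acyclic_path_uniq acE2 E2p.
have le_sz : size (x :: p) < #|T|.+1 by rewrite ltnS -(card_uniqP uxp) max_card.
apply: leq_trans (leq_bigmax (Ordinal le_sz)).
apply: leq_trans (leq_bigmax_cond (in_tuple (x :: p)) _); last by rewrite uxp /= E2p.
have /perm_to_subseq[r /(perm_big _) ->] : subseq (x :: q) (x :: p).
  by rewrite /= eqxx.
by rewrite big_cat leq_addr.
Qed.

End TransitiveClosure.

Section StrictOrder.
Variables (T : finType) (ord : rel T).
Hypotheses (ord_trans : transitive ord) (ord_irr : irreflexive ord).

Definition rank (t : T) : nat := #|[pred w | ord w t]|.

Lemma rank_lt x y : ord x y -> rank x < rank y.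
Proof.
move=> oxy; apply/proper_card/properP; split.
  by apply/subsetP => w; rewrite !inE => /ord_trans; apply.
by exists x; rewrite !inE ?ord_irr.
Qed.

Lemma rank_bound t : rank t < #|T|.
Proof.
have := max_card [predU1 t & [pred w | ord w t]].
by rewrite cardU1 inE /= ord_irr.
Qed.

Lemma comparable_rank_ltE x y : ord x y || ord y x -> ord x y = (rank x < rank y).
Proof.
case/orP=> [oxy|oyx]; first by rewrite oxy rank_lt.
by rewrite ltnNge ltnW ?rank_lt //; apply/negbTE/negP => /ord_trans/(_ oyx); rewrite ord_irr.
Qed.

Lemma greatest_exists (P : pred T) w0 : P w0 ->
    {in P &, forall u w, u != w -> ord u w || ord w u} ->
  exists2 m, P m & forall w, P w -> w != m -> ord w m.
Proof.
move=> Pw0 Pcmp; have [m Pm rank_max] := arg_maxnP rank Pw0.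
exists m => // w Pw wm; case/orP: (Pcmp _ _ Pw Pm wm) => // /rank_lt.
by move/leq_trans/(_ (rank_max _ Pw)); rewrite ltnn.
Qed.

End StrictOrder.

Section Conflict.
Variables (T : finType) (O : eqType) (R W : T -> seq O).

Lemma conflict_sym x y : conflict R W x y = conflict R W y x.
Proof.
rewrite /conflict eq_sym; congr (_ && _).
by rewrite (has_sym (W y) (R x)) (has_sym (R y)) (has_sym (W y) (W x)) orbCA.
Qed.

Lemma conflict_write_write o u w : u != w -> o \in W u -> o \in W w -> conflict R W u w.
Proof. by move=> uw ou ow; rewrite /conflict uw; apply/or3P/Or33/hasP; exists o. Qed.

Lemma conflict_write_read o w t : w != t -> o \in W w -> o \in R t -> conflict R W w t.
Proof. by move=> wt ow ot; rewrite /conflict wt; apply/or3P/Or32/hasP; exists o. Qed.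

End Conflict.

Section Run.
Variables (T : finType) (O : eqType) (W : T -> seq O) (V : Type).
Variables (upd : T -> (O -> V) -> O -> V) (s0 : O -> V).

Definition state_at (e : seq (T + T)) (k : nat) : O -> V :=
  (run W upd s0 (take k e)).1.
Definition snapshot_at (e : seq (T + T)) (k : nat) : T -> O -> V :=
  (run W upd s0 (take k e)).2.

Lemma run_take_succ e k x0 : k < size e ->
  run W upd s0 (take k.+1 e) = run_event W upd (run W upd s0 (take k e)) (nth x0 e k).
Proof. by move=> lt_k; rewrite /run (take_nth x0 lt_k) foldl_rcons. Qed.

Section Trace.
Variable e : seq (T + T).
Hypothesis e_uniq : uniq e.
Local Notation pos x := (index x e).

Lemma pos_nth x0 k : k < size e -> pos (nth x0 e k) = k.
Proof. by move=> lt_k; apply: index_uniq. Qed.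

Lemma pos_inj x y : pos x = pos y -> pos y < size e -> x = y.
Proof.
move=> pxy; rewrite index_mem => ye; have xe : x \in e by rewrite -index_mem pxy index_mem.
by rewrite -(nth_index x xe) pxy nth_index.
Qed.

Lemma snapshot_at_eq k t : k <= size e ->
  snapshot_at e k t = if pos (inl t) < k then state_at e (pos (inl t)) else s0.
Proof.
elim: k => [|k IH] lt_k; first by rewrite /snapshot_at take0.
move: (IH (ltnW lt_k)) (pos_nth (inl t) lt_k).
rewrite /snapshot_at (run_take_succ (inl t) lt_k) ltnS [pos _ <= k]leq_eqVlt.
case E: (run _ _ _ _) (nth _ e k) => [s sn] [t'|t'] /= -> pos_k.
  case: eqP => [-> | ne_t]; first by rewrite pos_k eqxx /state_at E.
  case: eqP => // pos_t; rewrite -pos_k in pos_t.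
  by case: ne_t; move: (pos_inj pos_t); rewrite pos_k => /(_ lt_k) [].
case: eqP => // pos_t; rewrite -pos_k in pos_t.
by move: (pos_inj pos_t); rewrite pos_k => /(_ lt_k).
Qed.

Lemma state_at_succ k o : k < size e ->
    (forall w, o \in W w -> pos (inr w) != k) ->
  state_at e k.+1 o = state_at e k o.
Proof.
move=> lt_k nowrite; have x0 : T + T by case: (e) lt_k => // x0 _ _; exact: x0.
move: (pos_nth x0 lt_k); rewrite /state_at (run_take_succ x0 lt_k).
case: (run _ _ _ _) (nth x0 e k) => s sn [t|t] //= pos_k.
by case: ifP => // /nowrite; rewrite pos_k eqxx.
Qed.

Lemma state_at_stable j k o : j <= k <= size e ->
    (forall w, o \in W w -> (pos (inr w) < j) || (k <= pos (inr w))) ->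
  state_at e k o = state_at e j o.
Proof.
elim: k => [|k IH] /andP[le_jk le_k] nowrite.
  by move: le_jk; rewrite leqn0 => /eqP->.
move: le_jk; rewrite leq_eqVlt => /predU1P[-> // | lt_jk].
rewrite state_at_succ // => [|w /nowrite].
  apply: IH => [|w /nowrite]; first by rewrite (ltnW le_k) andbT -ltnS.
  by case/orP=> [->//|/ltnW ->]; rewrite orbT.
case/orP=> lt_w; rewrite neq_ltn; last by rewrite lt_w orbT.
by rewrite (leq_trans lt_w) // -ltnS.
Qed.

Lemma state_at_unwritten k o : k <= size e ->
  (forall w, o \in W w -> k <= pos (inr w)) -> state_at e k o = s0 o.
Proof.
by move=> le_k nowrite; rewrite (@state_at_stable 0) ?le_k // /state_at take0.
Qed.

Hypothesis start_before_finish : forall t, pos (inl t) < pos (inr t).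

Lemma state_at_finish m o : pos (inr m) < size e -> o \in W m ->
  state_at e (pos (inr m)).+1 o = upd m (state_at e (pos (inl m))) o.
Proof.
move=> lt_m om; have := snapshot_at_eq m (ltnW lt_m).
rewrite start_before_finish /snapshot_at /state_at (run_take_succ (inr m) lt_m).
by rewrite nth_index -?index_mem //; case: (run _ _ _ _) => s sn /= ->; rewrite om.
Qed.

End Trace.
End Run.

Section Serializability.
Variables (T : finType) (O : eqType) (R W : T -> seq O) (V Res : Type).
Variables (res : T -> (O -> V) -> Res) (upd : T -> (O -> V) -> O -> V).
Hypothesis upd_local : tx_local R W res upd.
Variable ord : rel T.
Hypotheses (ord_trans : transitive ord) (ord_irr : irreflexive ord).
Hypothesis ord_conflict : forall x y, conflict R W x y -> ord x y || ord y x.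

Definition respects (e : seq (T + T)) : Prop :=
  [/\ uniq e, forall x, x \in e, forall t, index (inl t) e < index (inr t) e
    & forall u v, conflict R W u v -> ord u v -> index (inr u) e < index (inl v) e].

Lemma execution_respects S e : execution S e ->
  (forall u v, conflict R W u v -> ord u v -> tc S u v) -> respects e.
Proof.
case=> perm_e [start_finish edge_e] ord_tc.
have e_all x : x \in e by rewrite (perm_mem perm_e) mem_enum.
split=> // [|u v /ord_tc/[apply]/existsP[z /andP[Suz /connectP[p Sp ->]]]].
  by rewrite (perm_uniq perm_e) enum_uniq.
apply: leq_trans (edge_e _ _ Suz) _.
elim: p z Sp {Suz} => //= a p IH z /andP[Sza Sp].
exact: leq_trans (ltnW (ltn_trans (start_finish z) (edge_e _ _ Sza))) (IH _ Sp).
Qed.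

Section Traces.
Variable s0 : O -> V.
Local Notation state_at := (state_at W upd s0).

Section OneTrace.
Variable e : seq (T + T).
Hypothesis e_respects : respects e.
Local Notation pos x := (index x e).

Lemma finished_before_start t w o : o \in R t -> o \in W w ->
  (pos (inr w) < pos (inl t)) = ord w t.
Proof.
have [_ _ start_finish order_e] := e_respects.
move=> ot ow; have [<-|wt] := eqVneq w t.
  by rewrite ord_irr ltnNge ltnW.
have cwt := conflict_write_read wt ow ot.
have /orP[owt|otw] := ord_conflict cwt; first by rewrite owt order_e.
have -> : ord w t = false by apply/negbTE/negP => /(ord_trans otw); rewrite ord_irr.
rewrite ltnNge ltnW // (ltn_trans (start_finish t)) // (ltn_trans _ (start_finish w)) //.
by rewrite order_e // conflict_sym.
Qed.

Lemma state_at_greatest_writer k o (P : pred T) m : k <= size e ->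
    (forall w, (o \in W w) && (pos (inr w) < k) = P w) ->
    P m -> (forall w, P w -> w != m -> ord w m) ->
  state_at e k o = upd m (state_at e (pos (inl m))) o.
Proof.
have [e_uniq _ start_finish order_e] := e_respects.
move=> le_k defP Pm m_greatest; have /andP[om lt_m] : (o \in W m) && (pos (inr m) < k).
  by rewrite defP.
rewrite -state_at_finish // ?(leq_trans lt_m) //.
apply: state_at_stable => // [|w ow]; first by rewrite lt_m.
case: (leqP k (pos (inr w))) => [_|lt_w_k]; rewrite ?orbT // orbF ltnS.
have [->//|wm] := eqVneq w m.
have owm : ord w m by apply: m_greatest; rewrite // -defP ow lt_w_k.
apply: ltnW (ltn_trans (order_e _ _ _ owm) (start_finish m)).
exact: conflict_write_write wm ow om.
Qed.

End OneTrace.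

Section TwoTraces.
Variables e1 e2 : seq (T + T).
Hypotheses (e1_respects : respects e1) (e2_respects : respects e2).

Lemma agree_state_at k1 k2 o (P : pred T) : k1 <= size e1 -> k2 <= size e2 ->
    (forall w, (o \in W w) && (index (inr w) e1 < k1) = P w) ->
    (forall w, (o \in W w) && (index (inr w) e2 < k2) = P w) ->
    (forall m, P m ->
      {in R m, state_at e1 (index (inl m) e1) =1 state_at e2 (index (inl m) e2)}) ->
  state_at e1 k1 o = state_at e2 k2 o.
Proof.
move=> le_k1 le_k2 defP1 defP2 agreeP; have [w0 Pw0|noP] := pickP P; last first.
  have unwritten e k : respects e -> k <= size e ->
      (forall w, (o \in W w) && (index (inr w) e < k) = P w) -> state_at e k o = s0 o.
    case=> e_uniq _ _ _ le_k defP; apply: state_at_unwritten => // w ow.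
    by rewrite leqNgt; apply: contraFN (noP w) => lt_w; rewrite -defP ow.
  by rewrite !unwritten.
have writesP w : P w -> o \in W w by rewrite -defP1 => /andP[].
have cmpP : {in P &, forall u w, u != w -> ord u w || ord w u}.
  move=> u w Pu Pw uw; apply: ord_conflict.
  exact: conflict_write_write uw (writesP _ Pu) (writesP _ Pw).
have [m Pm m_greatest] := greatest_exists ord_trans ord_irr Pw0 cmpP.
rewrite (state_at_greatest_writer e1_respects le_k1 defP1 Pm m_greatest).
rewrite (state_at_greatest_writer e2_respects le_k2 defP2 Pm m_greatest).
by have [_ ->] := upd_local (agreeP m Pm); last exact: writesP.
Qed.

Lemma agree_snapshot t :
  {in R t, state_at e1 (index (inl t) e1) =1 state_at e2 (index (inl t) e2)}.
Proof.
elim: {t}(rank ord t).+1 {-2}t (ltnSn (rank ord t)) => // n IH t lt_t o ot.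
apply: (agree_state_at (P := [pred w | (o \in W w) && ord w t])); rewrite ?index_size //.
- by move=> w /=; case ow: (o \in W w); rewrite // (finished_before_start e1_respects ot ow).
- by move=> w /=; case ow: (o \in W w); rewrite // (finished_before_start e2_respects ot ow).
move=> m /andP[_ omt]; apply: IH.
exact: leq_trans (rank_lt ord_trans ord_irr omt) lt_t.
Qed.

Lemma agree_final : state_at e1 (size e1) =1 state_at e2 (size e2).
Proof.
have [_ e1_all _ _] := e1_respects; have [_ e2_all _ _] := e2_respects.
move=> o; apply: (agree_state_at (P := [pred w | o \in W w])) => // [w|w|m _].
- by rewrite index_mem e1_all andbT.
- by rewrite index_mem e2_all andbT.
exact: agree_snapshot.
Qed.

Lemma agree_result t :
  res t (snapshot_at W upd s0 e1 (size e1) t) = res t (snapshot_at W upd s0 e2 (size e2) t).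
Proof.
have [e1_uniq e1_all _ _] := e1_respects; have [e2_uniq e2_all _ _] := e2_respects.
rewrite !snapshot_at_eq // !index_mem e1_all e2_all.
exact: (upd_local (agree_snapshot (t := t))).1.
Qed.

End TwoTraces.
End Traces.

Lemma respects_equivalent S1 S2 :
    (forall e, execution S1 e -> respects e) -> (forall e, execution S2 e -> respects e) ->
  equivalent W res upd S1 S2.
Proof.
move=> resp1 resp2 s0 e1 e2 ex1 ex2.
have e1_respects : respects e1 by case: ex1 => [/resp1|/resp2].
have e2_respects : respects e2 by case: ex2 => [/resp1|/resp2].
split=> [t|o]; rewrite /result /final_state.
  by have := agree_result s0 e1_respects e2_respects t; rewrite /snapshot_at !take_size.
by have := agree_final s0 e1_respects e2_respects o; rewrite /state_at !take_size.
Qed.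

End Serializability.

Section Foldl.
Variables (A : Type) (B : eqType) (f : A -> B -> A).

Lemma foldl_inv (I : A -> Prop) (l : seq B) s :
  I s -> (forall a b, b \in l -> I a -> I (f a b)) -> I (foldl f s l).
Proof.
elim: l s => //= b l IH s Is fI; apply: IH => [|a c cl]; first by apply: fI; rewrite ?inE ?eqxx.
by apply: fI; rewrite inE cl orbT.
Qed.

Lemma foldl_reach (P : A -> Prop) (l : seq B) s b : b \in l ->
  (forall a, P (f a b)) -> (forall a c, P a -> P (f a c)) -> P (foldl f s l).
Proof.
elim: l s => //= c l IH s; rewrite inE => /predU1P[<- Pb Pf | bl Pb Pf]; last exact: IH.
by apply: foldl_inv => // a d _; apply: Pf.
Qed.

End Foldl.

Section LevelPartition.
Variables (T : finType) (O : eqType) (R W : T -> seq O) (lv : T -> nat) (n : nat).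

Definition level_partition : seq {set T} := mkseq (fun i => [set t | lv t == i]) n.
Local Notation Bs := level_partition.

Lemma mem_level x j : (x \in nth set0 (set0 :: Bs) j) = (j == (lv x).+1) && (lv x < n).
Proof.
case: j => [|j] /=; first by rewrite inE.
have [lt_j | le_j] := ltnP j n.
  by rewrite nth_mkseq // inE eqSS eq_sym; case: eqP => // <-; rewrite lt_j.
by rewrite nth_default ?size_mkseq // inE eqSS; case: eqP => // <-; rewrite ltnNge le_j.
Qed.

Lemma level_partition_legal : (forall t, lv t < n) ->
  (forall x y, conflict R W x y -> lv x != lv y) -> legal_partition R W Bs.
Proof.
move=> lv_bound lv_conflict; split; [|split].
- move=> i j lt_ij; rewrite size_mkseq => lt_j; rewrite !nth_mkseq ?(ltn_trans lt_ij) //.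
  apply/pred0P => x /=; rewrite !inE; apply: contraTF lt_ij.
  by case/andP=> /eqP<- /eqP->; rewrite ltnn.
- move=> _ /mapP[i _ ->] x y; rewrite !inE => /eqP lvx /eqP lvy.
  by apply/negP => /lv_conflict; rewrite lvx lvy eqxx.
- apply/setP => x; rewrite inE bigcup_seq; apply/bigcupP.
  exists [set t | lv t == lv x]; rewrite ?inE //.
  by apply/mapP; exists (lv x); rewrite ?mem_iota ?lv_bound.
Qed.

Lemma level_schedule_edge x y :
  LevelSchedule R W Bs x y -> conflict R W x y && (lv x < lv y).
Proof.
rewrite /LevelSchedule; set I := fun S : {set T * T} =>
  forall x y, (x, y) \in S -> conflict R W x y && (lv x < lv y).
apply: (foldl_inv (I := I)) => [u v|S i _ IS]; first by rewrite inE.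
apply: foldl_inv => // S' j; rewrite mem_rev mem_iota add0n => /= lt_ji IS' u v.
rewrite /level_step !inE /= => /orP[/IS' // | /and4P[ju iv -> _]].
by move: ju iv lt_ji; rewrite !mem_level => /andP[/eqP-> _] /andP[/eqP-> _].
Qed.

Lemma level_schedule_tc x y : conflict R W x y -> lv x < lv y -> lv y < n ->
  tc (LevelSchedule R W Bs) x y.
Proof.
move=> cxy lt_xy lt_y; rewrite /LevelSchedule /=.
set Q := fun S : {set T * T} => tc (relS S) x y.
have Q_step Bj Bi S : Q S -> Q (level_step R W Bj Bi S).
  by apply: tc_sub => u v; rewrite /relS /level_step inE => ->.
apply: (@foldl_reach _ _ _ Q _ _ (lv y).+1) => [|S|S i QS].
- by rewrite mem_iota size_mkseq add1n !ltnS lt_y.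
- apply: (@foldl_reach _ _ _ Q _ _ (lv x).+1) => [|S' |S' j]; last exact: Q_step.
    by rewrite mem_rev mem_iota.
  rewrite /Q; case tc_xy: (tc (relS S') x y); first exact: Q_step.
  apply: (tc_intro (z := y)) (connect0 _ _).
  by rewrite /relS /level_step !inE !mem_level !eqxx cxy tc_xy (ltn_trans lt_xy) lt_y ?orbT.
apply: (foldl_inv (I := Q)) => // S' j _; exact: Q_step.
Qed.

End LevelPartition.

Theorem theorem3 (T : finType) (O : eqType) (R W : T -> seq O)
  (ell : T -> nat) (ell_pos : forall t, 0 < ell t)
  (V Res : Type) (res : T -> (O -> V) -> Res) (upd : T -> (O -> V) -> O -> V)
  (Hloc : tx_local R W res upd)
  (S : rel T) (HS : valid_schedule R W S) :
  exists Bs : seq {set T},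
    legal_partition R W Bs /\
    equivalent W res upd S (LevelSchedule R W Bs) /\
    latency ell (LevelSchedule R W Bs) <= latency ell S.
Proof.
have [S_acyclic S_conflict] := HS.
have ord_irr : irreflexive (tc S) by move=> x; apply/negbTE/S_acyclic.
pose lv := rank (tc S).
have lv_bound t : lv t < #|T| := rank_bound ord_irr t.
have tc_lv x y : conflict R W x y -> tc S x y = (lv x < lv y).
  by move/S_conflict; exact: comparable_rank_ltE (@tc_trans _ S) ord_irr x y.
have LS_tc x y : conflict R W x y -> tc S x y ->
    tc (LevelSchedule R W (level_partition lv #|T|)) x y.
  by move=> cxy; rewrite tc_lv // => /level_schedule_tc; apply.
exists (level_partition lv #|T|); split; [|split].
- apply: level_partition_legal => // x y cxy.
  by have := S_conflict x y cxy; rewrite tc_lv // tc_lv 1?conflict_sym // neq_ltn.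
- exact: (respects_equivalent Hloc (@tc_trans _ S) ord_irr S_conflict
    (fun e ex => execution_respects ex (fun _ _ _ => id))
    (fun e ex => execution_respects ex LS_tc)).
apply: latency_sub_tc S_acyclic _ => x y /level_schedule_edge/andP[cxy].
by rewrite -tc_lv.
Qed.
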